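(* Let $1\le N_a<N_b$, $\mathcal N=N_a+N_b$, real $\kappa_1<\dots<\kappa_{\mathcal N}$ with indices taken modulo $\mathcal N$. For $q=(q_1,q_2)\in\mathbb R^2$ define $q_{mn}=q_2-(\kappa_m+\kappa_n)q_1+\kappa_m\kappa_n$, $\widetilde q_{mn}=(\kappa_m-\kappa_n)q_{mn}$, $\rho_k(q)=\theta(\widetilde q_{k,k-N_a})\theta(\widetilde q_{k+N_a,k})$ ($\theta$ the Heaviside step function) and $P_m(q)=\prod_{k=m+N_a}^{m+N_b}\rho_k(q)$. Let $$\epsilon_m(q)=\prod_{k=m}^{m+N_b}\theta(\widetilde q_{k+N_a,k}).$$ Then $$\epsilon_m(q)=P_m(q)\quad\text{if } N_b\ge 2N_a-1,\qquad \epsilon_m(q)=P_m(q)\prod_{k=m+N_b-N_a+1}^{m+N_a-1}\theta(\widetilde q_{k+N_a,k})\quad\text{if } N_b<2N_a-1 .$$ Consequently the polygon with characteristic function $\epsilon_m$ is contained in the polygon with characteristic function $P_m$ and in the parabolic region $q_2\ge q_1^2$. Moreover, the polygon defined by $\epsilon_m$ is not void.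
   Context: Indices of $\kappa$ are read modulo $\mathcal N$, i.e. $\kappa_{l+\mathcal N}=\kappa_l$. The region defined by $P_m$ is a polygon inside the parabolic region $q_2\ge q_1^2$ with a vertex at $(\kappa_m,\kappa_m^2)$. *)

From mathcomp Require Import all_boot all_order all_algebra.
From mathcomp Require Import reals.
Set Implicit Arguments. Unset Strict Implicit. Unset Printing Implicit Defensive.
Import Order.TTheory GRing.Theory Num.Theory.
Local Open Scope ring_scope.

Section Defs.
Variable R : realType.

Definition theta (x : R) : R := if 0 < x then 1 else 0.

(* kappa is given on indices 1..N; indices are read modulo N:
   kap N kappa k = kappa_l with l in 1..N, l = k mod N. *)
Definition kap (N : nat) (kappa : nat -> R) (k : nat) : R :=
  kappa (((k + N.-1) %% N).+1)%N.

Definition qmn N kappa (m n : nat) (q : R * R) : R :=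
  q.2 - (kap N kappa m + kap N kappa n) * q.1 + kap N kappa m * kap N kappa n.

Definition qt N kappa (m n : nat) (q : R * R) : R :=
  (kap N kappa m - kap N kappa n) * qmn N kappa m n q.

Definition rho (Na Nb : nat) kappa (k : nat) (q : R * R) : R :=
  theta (qt (Na + Nb) kappa k (k - Na)%N q) *
  theta (qt (Na + Nb) kappa (k + Na)%N k q).

Definition Pm (Na Nb : nat) kappa (m : nat) (q : R * R) : R :=
  \prod_(m + Na <= k < (m + Nb).+1) rho Na Nb kappa k q.

Definition epsm (Na Nb : nat) kappa (m : nat) (q : R * R) : R :=
  \prod_(m <= k < (m + Nb).+1) theta (qt (Na + Nb) kappa (k + Na)%N k q).

End Defs.

(* For the edge from k to k + Na, qt has the sign of the position of q relative to
   the secant of the parabola q2 = q1^2 through the abscissae kappa_k and kappa_(k+Na):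
   q must lie above it for the Nb short edges (no wrap-around, kappa_k < kappa_(k+Na))
   and below it for the Na long edges that wrap around.

   As theta only takes the values 0 and 1, eps_m and P_m are indicators of
   conjunctions of such conditions; the edges met in P_m are those of eps_m except
   the ones with m + Nb - Na < k < m + Na, which is the announced factor.

   If q lay strictly below the parabola, each short edge of the window would push
   q1 out of [kappa_k, kappa_(k+Na)]. These intervals overlap consecutively, so q1
   lies to the left or to the right of a whole chain of them, and there the long
   edge spanning the chain contradicts the short edge at the end of the chain.

   A point of the polygon is found on the segment from the vertex
   (kappa_m, kappa_m^2), where every edge not through the vertex is positive, towards
   the midpoint of two parabola points at which the two edges through the vertex
   are positive. *)

From mathcomp Require Import all_boot all_order all_algebra.
From mathcomp Require Import reals.
From mathcomp Require Import ring lra zify.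
Set Implicit Arguments. Unset Strict Implicit. Unset Printing Implicit Defensive.
Import Order.TTheory GRing.Theory Num.Theory.
Local Open Scope ring_scope.

Section Vandermonde.
Variable R : realDomainType.

Definition vdm3 (a b c : R) := (b - a) * (c - b) * (c - a).

Lemma vdm3_cycle a b c : vdm3 a b c = vdm3 b c a.
Proof. by rewrite /vdm3; ring. Qed.

Lemma vdm3_gt0 a b c : a < b -> b < c -> 0 < vdm3 a b c.
Proof. by move=> hab hbc; rewrite !mulr_gt0 // subr_gt0 // (lt_trans hab hbc). Qed.

End Vandermonde.

Section Secant.
Variable R : realDomainType.

(* [q.2] minus the height at [q.1] of the secant of [y = x^2] through the abscissae
   [a] and [b]; [qmn N kappa m n q] is [secant q (kap N kappa m) (kap N kappa n)]. *)
Definition secant (q : R * R) (a b : R) := q.2 - (a + b) * q.1 + a * b.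

Definition parab (y : R) : R * R := (y, y ^+ 2).

Definition mix (t : R) (p p' : R * R) : R * R :=
  ((1 - t) * p.1 + t * p'.1, (1 - t) * p.2 + t * p'.2).

Lemma secantC q a b : secant q a b = secant q b a.
Proof. by rewrite /secant; ring. Qed.

Lemma secant_parab y a b : secant (parab y) a b = (y - a) * (y - b).
Proof. by rewrite /secant /=; ring. Qed.

Lemma secant_gt0_outside q a b :
  q.2 < q.1 ^+ 2 -> 0 < secant q a b -> q.1 < a \/ b < q.1.
Proof.
rewrite /secant => hq hs; case: (ltrP q.1 a) => ha; first by left.
by case: (ltrP b q.1) => hb; [right | exfalso; nra].
Qed.

Lemma secant_left q a b c :
  q.1 < a -> c < b -> 0 < secant q a c -> secant q a b < 0 -> False.
Proof. rewrite /secant => *; nra. Qed.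

Lemma secant_right q a b c :
  b < q.1 -> a < c -> 0 < secant q c b -> secant q a b < 0 -> False.
Proof. rewrite /secant => *; nra. Qed.

End Secant.

Section AffinePositivity.
Variable R : realFieldType.

Lemma affine_pos_shrink (a b t s : R) : 0 <= a -> 0 < s -> s <= t ->
  0 < (1 - t) * a + t * b -> 0 < (1 - s) * a + s * b.
Proof. move=> *; nra. Qed.

Lemma affine_pos_start (a b : R) : 0 < a \/ (a = 0 /\ 0 < b) ->
  exists2 t, 0 < t & 0 < (1 - t) * a + t * b.
Proof.
move=> hab; case: (lerP 0 b) => hb; first by exists 2^-1; lra.
have ha : 0 < a by case: hab => [//|[_]]; lra.
exists (a / (2 * (a - b))); first by apply: divr_gt0; lra.
have -> : (1 - a / (2 * (a - b))) * a + a / (2 * (a - b)) * b = a / 2.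
  by field; lra.
lra.
Qed.

Lemma affine_pos_common (I : eqType) (s : seq I) (a b : I -> R) :
  (forall k, k \in s -> 0 < a k \/ (a k = 0 /\ 0 < b k)) ->
  exists2 t, 0 < t & forall k, k \in s -> 0 < (1 - t) * a k + t * b k.
Proof.
elim: s => [|k s IH] H; first by exists 1.
have [t0 ht0 Ht0] := IH (fun j hj => H j (mem_behead (s := k :: s) hj)).
have Hk := H k (mem_head _ _).
have [tk htk Htk] := affine_pos_start Hk.
have a_ge0 j : j \in k :: s -> 0 <= a j by move/H => [/ltW|[->]].
have [t_le0 t_lek] : Order.min t0 tk <= t0 /\ Order.min t0 tk <= tk.
  by rewrite !ge_min !lexx orbT.
exists (Order.min t0 tk) => [|j]; first by rewrite lt_min ht0.
rewrite inE => /orP[/eqP ->|hj].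
  by apply: affine_pos_shrink Htk; rewrite ?a_ge0 ?mem_head ?lt_min ?ht0.
by apply: affine_pos_shrink (Ht0 j hj); rewrite ?a_ge0 ?inE ?hj ?orbT ?lt_min ?ht0.
Qed.

End AffinePositivity.

Section CyclicKappa.
Variables (R : realType) (N : nat) (kappa : nat -> R).
Local Notation K := (kap N kappa).

Lemma kap_mod a b : a = b %[mod N] -> K a = K b.
Proof. by move=> H; rewrite /kap -modnDml H modnDml. Qed.

Lemma kapDN k : K (k + N) = K k.
Proof. by apply: kap_mod; rewrite modnDr. Qed.

Lemma kap_id k : (1 <= k <= N)%N -> K k = kappa k.
Proof.
move=> hk; rewrite /kap.
have -> : (k + N.-1 = k.-1 + N)%N by lia.
by rewrite modnDr modn_small; [congr kappa|]; lia.
Qed.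

Lemma residue_rep n : (0 < N)%N -> exists2 n0, (1 <= n0 <= N)%N & n0 = n %[mod N].
Proof.
move=> hN; exists (if n %% N == 0 then N else n %% N)%N.
  case: eqP => h; first lia.
  by rewrite lt0n (ltnW (ltn_pmod _ hN)) andbT; apply/eqP.
by case: eqP => [->|_]; rewrite ?modnn ?modn_mod.
Qed.

Hypothesis kappa_lt : forall i j : nat,
  (1 <= i)%N -> (i < j)%N -> (j <= N)%N -> kappa i < kappa j.

Lemma kap_wrap u w : (u = w \/ u + N = w)%N -> K u = K w.
Proof. by case=> <-; rewrite ?kapDN. Qed.

Lemma kap_lt i j : (1 <= i)%N -> (i < j)%N -> (j <= N)%N -> K i < K j.
Proof. by move=> h1 h2 h3; rewrite !kap_id ?kappa_lt //; lia. Qed.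

Lemma kap_le i j : (1 <= i)%N -> (i <= j)%N -> (j <= N)%N -> K i <= K j.
Proof.
by move=> h1 h2 h3; case: (ltngtP i j) => [hij|//|->]; [apply/ltW/kap_lt | lia |].
Qed.

(* [vdm3] is invariant under rotation, so only the cyclic order of the indices matters. *)
Lemma kap_vdm3_gt0 n r1 r2 : (0 < r1)%N -> (r1 < r2)%N -> (r2 < N)%N ->
  0 < vdm3 (K n) (K (n + r1)) (K (n + r2)).
Proof.
move=> h1 h12 h2.
have [n0 hn0 en] := residue_rep n (leq_ltn_trans (leq0n _) h2).
have shift r : K (n + r) = K (n0 + r).
  by apply: kap_mod; rewrite -modnDml -en modnDml.
have wrap r : (N < n0 + r)%N -> K (n0 + r) = K (n0 + r - N).
  by move=> h; rewrite -[RHS]kapDN subnK //; lia.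
rewrite -{1}(addn0 n) !shift addn0.
case: (leqP (n0 + r2) N) => c2; first by apply: vdm3_gt0; apply: kap_lt; lia.
rewrite (wrap r2) //; case: (leqP (n0 + r1) N) => c1.
  by rewrite -vdm3_cycle; apply: vdm3_gt0; apply: kap_lt; lia.
by rewrite (wrap r1) // vdm3_cycle; apply: vdm3_gt0; apply: kap_lt; lia.
Qed.

End CyclicKappa.

Section EdgeFunctions.
Variables (R : realType) (N : nat) (kappa : nat -> R).
Local Notation K := (kap N kappa).

Lemma qt_secant u v q : qt N kappa u v q = (K u - K v) * secant q (K u) (K v).
Proof. by []. Qed.

Lemma qt_mix u v t p p' :
  qt N kappa u v (mix t p p') = (1 - t) * qt N kappa u v p + t * qt N kappa u v p'.
Proof. by rewrite !qt_secant /secant /=; ring. Qed.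

Lemma qt_parab u v n : qt N kappa u v (parab (K n)) = vdm3 (K n) (K v) (K u).
Proof. by rewrite qt_secant secant_parab /vdm3; ring. Qed.

End EdgeFunctions.

Section ThetaProducts.
Variable R : realType.

Lemma prod_theta (I : Type) (s : seq I) (F : I -> R) :
  \prod_(i <- s) theta (F i) = (all (fun i => 0 < F i) s)%:R.
Proof.
elim: s => [|i s IH]; first by rewrite big_nil.
by rewrite big_cons IH /theta /=; case: (0 < F i); rewrite ?mul1r ?mul0r.
Qed.

Lemma natr_bool_eq1 (b : bool) : (b%:R = 1 :> R) <-> b.
Proof. by case: b; split=> // /eqP; rewrite pnatr_eq1. Qed.

Variables (Na Nb : nat) (kappa : nat -> R) (m : nat) (q : R * R).
Local Notation edge_pos := (fun k => 0 < qt (Na + Nb) kappa (k + Na) k q).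

Lemma epsm_all :
  epsm Na Nb kappa m q = (all edge_pos (index_iota m (m + Nb).+1))%:R.
Proof. exact: prod_theta. Qed.

Lemma epsm_eq1 :
  epsm Na Nb kappa m q = 1 <->
  (forall k, (m <= k <= m + Nb)%N -> 0 < qt (Na + Nb) kappa (k + Na) k q).
Proof.
rewrite epsm_all natr_bool_eq1; split => [/allP H k hk | H].
  by apply: H; rewrite mem_index_iota.
by apply/allP => k; rewrite mem_index_iota => /H.
Qed.

Hypothesis hNab : (Na <= Nb)%N.

Lemma Pm_all : Pm Na Nb kappa m q =
  (all edge_pos (index_iota m (m + Nb - Na).+1 ++ index_iota (m + Na) (m + Nb).+1))%:R.
Proof.
rewrite /Pm /rho big_split /= !prod_theta all_cat -mulnb natrM; congr ((nat_of_bool _)%:R * _).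
have -> : index_iota (m + Na) (m + Nb).+1 = map (addn Na) (index_iota m (m + Nb - Na).+1).
  by rewrite /index_iota -iotaDl; congr iota; lia.
rewrite all_map; apply: eq_all => k /=.
by rewrite [(Na + k)%N]addnC addnK.
Qed.

Lemma epsm_Pm : (2 * Na - 1 <= Nb)%N -> epsm Na Nb kappa m q = Pm Na Nb kappa m q.
Proof.
move=> hN; rewrite epsm_all Pm_all; congr ((nat_of_bool _)%:R); apply: eq_all_r => k.
by rewrite mem_cat !mem_index_iota; apply/idP/idP; lia.
Qed.

Lemma epsm_Pm_gap : (Nb < 2 * Na - 1)%N ->
  epsm Na Nb kappa m q =
  Pm Na Nb kappa m q *
  \prod_(m + Nb - Na + 1 <= k < m + Na) theta (qt (Na + Nb) kappa (k + Na) k q).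
Proof.
move=> hN; rewrite epsm_all Pm_all prod_theta -natrM mulnb -all_cat.
congr ((nat_of_bool _)%:R); apply: eq_all_r => k.
by rewrite !mem_cat !mem_index_iota; apply/idP/idP; lia.
Qed.

Lemma Pm_eq1_of_epsm : epsm Na Nb kappa m q = 1 -> Pm Na Nb kappa m q = 1.
Proof.
move=> /epsm_eq1 H; rewrite Pm_all natr_bool_eq1; apply/allP => k.
by rewrite mem_cat !mem_index_iota => hk; apply: H; lia.
Qed.

End ThetaProducts.

Section BelowParabola.
Variables (R : realType) (Na Nb : nat) (kappa : nat -> R).
Local Notation N := (Na + Nb)%N.
Local Notation K := (kap N kappa).
Hypothesis kappa_lt : forall i j : nat,
  (1 <= i)%N -> (i < j)%N -> (j <= N)%N -> kappa i < kappa j.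
Hypotheses (hNa : (1 <= Na)%N) (hNab : (Na < Nb)%N).
Variable q : R * R.
Hypothesis below : q.2 < q.1 ^+ 2.

(* The intervals [K j, K (j + p)] overlap consecutively, so [q.1] avoids their union. *)
Lemma secant_chain p lo hi : (0 < p)%N -> (1 <= lo)%N -> (lo + p <= hi <= N)%N ->
  (forall j, (lo <= j <= hi - p)%N -> 0 < secant q (K j) (K (j + p))) ->
  q.1 < K lo \/ K hi < q.1.
Proof.
move=> hp hlo; elim: hi => [|hi IH] hhi H; first lia.
have := secant_gt0_outside below (H (hi.+1 - p)%N ltac:(lia)).
rewrite subnK; last lia.
case=> [hj|]; last by right.
have [hlt|hge] := ltnP (lo + p) hi.+1; last first.
  by left; have -> : lo = (hi.+1 - p)%N by lia.
have [|hhi'] := IH ltac:(lia) (fun j hj => H j ltac:(lia)); first by left.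
have : K (hi.+1 - p) <= K hi by apply: (kap_le kappa_lt); lia.
lra.
Qed.

Lemma long_secants_contra lo hi : (1 <= lo)%N -> (lo + Nb <= hi <= N)%N ->
  q.1 < K lo \/ K hi < q.1 ->
  0 < secant q (K lo) (K (lo + Na)) -> 0 < secant q (K (hi - Na)) (K hi) ->
  secant q (K lo) (K (lo + Nb)) < 0 -> secant q (K (hi - Nb)) (K hi) < 0 -> False.
Proof.
move=> hlo hhi [h|h] hsl hsr hll hlr.
  by apply: (secant_left h _ hsl hll); apply: (kap_lt kappa_lt); lia.
by apply: (secant_right h _ hsr hlr); apply: (kap_lt kappa_lt); lia.
Qed.

Variable m : nat.
Hypothesis window : forall k, (m <= k <= m + Nb)%N -> 0 < qt N kappa (k + Na) k q.
Local Notation in_window j := ((m <= j <= m + Nb) || (m <= j + N <= m + Nb))%N.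

Lemma window_short j : (1 <= j <= Nb)%N -> in_window j ->
  0 < secant q (K j) (K (j + Na)).
Proof.
move=> hj hw; have hk : 0 < qt N kappa (j + Na) j q.
  case/orP: hw => [/window //|/window]; by rewrite /qt /qmn addnAC !kapDN.
rewrite qt_secant pmulr_rgt0 in hk; first by rewrite secantC.
by rewrite subr_gt0; apply: (kap_lt kappa_lt); lia.
Qed.

Lemma window_long a : (1 <= a <= Na)%N -> (m <= a + Nb <= m + Nb)%N ->
  secant q (K a) (K (a + Nb)) < 0.
Proof.
move=> ha /window; rewrite qt_secant.
have -> : (a + Nb + Na = a + N)%N by lia.
rewrite kapDN nmulr_rgt0 // subr_lt0; apply: (kap_lt kappa_lt); lia.
Qed.

Lemma one_chord_contra a : (1 <= a <= Na)%N -> (m <= a + Nb <= m + Nb)%N ->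
  (forall j, (a <= j <= a + Nb - Na)%N -> in_window j) -> False.
Proof.
move=> ha hl hw.
have hs j : (a <= j <= a + Nb - Na)%N -> 0 < secant q (K j) (K (j + Na)).
  by move=> hj; apply: window_short (hw j hj); lia.
apply: (long_secants_contra (lo := a) (hi := a + Nb)); try lia.
- by apply: (secant_chain _ _ _ hs); lia.
- by apply: hs; lia.
- by have := hs (a + Nb - Na)%N ltac:(lia); rewrite subnK //; lia.
- exact: window_long.
- by rewrite addnK; apply: window_long.
Qed.

(* No long edge has its whole chain of short edges in the window here, but the
   chains starting at [1] and at [m] meet at [K m]. *)
Lemma two_chords_contra : (Na < m <= Nb)%N -> False.
Proof.
move=> hm.
have hs j : (1 <= j <= m - Na)%N || (m <= j <= Nb)%N -> 0 < secant q (K j) (K (j + Na)).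
  by move=> hj; apply: window_short; lia.
apply: (long_secants_contra (lo := 1) (hi := N)); try lia.
- have [|h1] := secant_chain (lo := 1) (hi := m) hNa isT ltac:(lia)
                  (fun j hj => hs j ltac:(lia)); first by left.
  have [h2|] := secant_chain (lo := m) (hi := N) hNa ltac:(lia) ltac:(lia)
                  (fun j hj => hs j ltac:(lia)); [lra | by right].
- by apply: hs; lia.
- by have := hs Nb ltac:(lia); rewrite addKn addnC.
- by apply: window_long; lia.
- by rewrite addnK; apply: window_long; lia.
Qed.

End BelowParabola.

Lemma window_above_parabola (R : realType) (Na Nb : nat) (kappa : nat -> R)
  (kappa_lt : forall i j : nat,
    (1 <= i)%N -> (i < j)%N -> (j <= Na + Nb)%N -> kappa i < kappa j)
  (hNa : (1 <= Na)%N) (hNab : (Na < Nb)%N) (q : R * R) m :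
  (1 <= m <= Na + Nb)%N ->
  (forall k, (m <= k <= m + Nb)%N -> 0 < qt (Na + Nb) kappa (k + Na) k q) ->
  q.1 ^+ 2 <= q.2.
Proof.
move=> hm hw; rewrite leNgt; apply/negP => below.
have [hA|[hB|hC]] : (m <= Na \/ Na < m <= Nb \/ Nb < m)%N by lia.
- by apply: (one_chord_contra kappa_lt hNa hNab below hw (a := m)) => [||j hj]; lia.
- exact: (two_chords_contra kappa_lt hNa hNab below hw).
- by apply: (one_chord_contra kappa_lt hNa hNab below hw (a := m - Nb)) => [||j hj]; lia.
Qed.

Section NonVoid.
Variables (R : realType) (Na Nb : nat) (kappa : nat -> R).
Local Notation N := (Na + Nb)%N.
Local Notation K := (kap N kappa).
Hypothesis kappa_lt : forall i j : nat,
  (1 <= i)%N -> (i < j)%N -> (j <= N)%N -> kappa i < kappa j.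
Hypotheses (hNa : (1 <= Na)%N) (hNab : (Na < Nb)%N).

Lemma epsm_nonvoid m : exists q, epsm Na Nb kappa m q = 1.
Proof.
have cyc n u v r1 r2 : (0 < r1)%N -> (r1 < r2 < N)%N ->
    (u = n + r1 \/ u + N = n + r1)%N -> (v = n + r2 \/ v + N = n + r2)%N ->
    0 < vdm3 (K n) (K u) (K v).
  move=> h1 /andP[h2 h3] /kap_wrap -> /kap_wrap ->.
  exact: kap_vdm3_gt0.
have Km : K (m + Nb + Na) = K m by symmetry; apply: kap_wrap; lia.
pose a k := qt N kappa (k + Na) k (parab (K m)).
pose b k := qt N kappa (k + Na) k (mix 2^-1 (parab (K (m + Nb))) (parab (K (m + Na)))).
have hab k : k \in index_iota m (m + Nb).+1 -> 0 < a k \/ (a k = 0 /\ 0 < b k).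
  rewrite mem_index_iota /a /b qt_mix !qt_parab => hk.
  have [->|[->|hk']] : (k = m \/ k = m + Nb \/ m < k < m + Nb)%N by lia.
  - right; rewrite /vdm3 !subrr !(mul0r, mulr0) addr0; split=> //.
    have : 0 < vdm3 (K (m + Nb)) (K m) (K (m + Na)) by apply: (cyc _ _ _ Na (Na + Na)%N); lia.
    rewrite /vdm3; lra.
  - right; rewrite Km /vdm3 !subrr !(mul0r, mulr0) add0r; split=> //.
    have : 0 < vdm3 (K (m + Na)) (K (m + Nb)) (K m) by apply: (cyc _ _ _ (Nb - Na)%N Nb); lia.
    rewrite /vdm3; lra.
  - by left; apply: (cyc _ _ _ (k - m)%N (k - m + Na)%N); lia.
have [t _ Ht] := affine_pos_common hab.
exists (mix t (parab (K m)) (mix 2^-1 (parab (K (m + Nb))) (parab (K (m + Na))))).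
apply/epsm_eq1 => k hk; rewrite qt_mix; apply: Ht.
by rewrite mem_index_iota; lia.
Qed.

End NonVoid.

Theorem lemma5p2 (R : realType) (Na Nb : nat) (kappa : nat -> R)
  (hNa : (1 <= Na)%N) (hNab : (Na < Nb)%N)
  (hinc : forall i j : nat, (1 <= i)%N -> (i < j)%N -> (j <= Na + Nb)%N ->
          kappa i < kappa j)
  (m : nat) (hm1 : (1 <= m)%N) (hm2 : (m <= Na + Nb)%N) :
  ((2 * Na - 1 <= Nb)%N -> forall q : R * R, epsm Na Nb kappa m q = Pm Na Nb kappa m q)
  /\ ((Nb < 2 * Na - 1)%N -> forall q : R * R,
        epsm Na Nb kappa m q =
        Pm Na Nb kappa m q *
        \prod_(m + Nb - Na + 1 <= k < m + Na)
           theta (qt (Na + Nb) kappa (k + Na)%N k q))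
  /\ (forall q : R * R, epsm Na Nb kappa m q = 1 -> Pm Na Nb kappa m q = 1)
  /\ (forall q : R * R, epsm Na Nb kappa m q = 1 -> q.1 ^+ 2 <= q.2)
  /\ (exists q : R * R, epsm Na Nb kappa m q = 1).
Proof.
have hNab' := ltnW hNab.
split; first by move=> hN q; apply: epsm_Pm.
split; first by move=> hN q; apply: epsm_Pm_gap.
split; first by move=> q; apply: Pm_eq1_of_epsm.
split; last exact: epsm_nonvoid.
move=> q /epsm_eq1; apply: window_above_parabola => //.
by apply/andP.
Qed.
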